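(* For all sufficiently large integers $n$, \[ \frac{n^{\,n-\log n}\sqrt{n}\,\sqrt{2\pi}}{e^{n}}\;\leq\;\lambda(n)\;\leq\;\frac{n^{n}\sqrt{n}\,\sqrt{2\pi}}{2^{\log n}\,e^{n}} . \]
   Context: The rockers function $\lambda:\mathbb{N}\to\mathbb{R}^{+}$ is defined by $\lambda(1)=1$, $\lambda(2)=2$, and for $n\geq 3$, \[ \lambda(n)=2^{\frac{n-2}{n-1}}\,3^{\frac{n-3}{n-2}}\cdots (n-1)^{\frac{1}{2}}\, n=\prod_{k=0}^{n-2}(n-k)^{\frac{k}{k+1}} . \] $\log$ denotes the natural logarithm. *)

From Stdlib Require Import Reals.
Open Scope R_scope.

Fixpoint rock_prod (n : nat) (m : nat) : R :=
  match m with
  | O => 1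
  | S m' => rock_prod n m' * Rpower (INR (n - m)) (INR m / INR (m + 1))
  end.

(* Rockers function: lambda(n) = n * prod_{k=1}^{n-2} (n-k)^(k/(k+1)),
   i.e. 2^((n-2)/(n-1)) 3^((n-3)/(n-2)) ... (n-1)^(1/2) n.
   This gives lambda(1)=1, lambda(2)=2. lambda(0) is irrelevant (set to 0). *)
Definition rockers (n : nat) : R := INR n * rock_prod n (n - 2).

(** Taking logarithms, [ln λ(n) = ln n! - S(n)] with
    [S(n) = Σ_{k=1}^{n-2} ln(n-k)/(k+1)].  The Stirling remainder
    [ln n! - (n ln n - n + ln n / 2)] lies in [[1/2, 1]], and [S(n)] is
    squeezed between [13/12 ln(n/2)] (its first three terms) and
    [ln n ^ 2 - 3/5] (from [ln(n-k) <= ln n - k/n] and the harmonic bound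
    [Σ 1/(k+1) <= ln(m+1)]).  Since [ln (2π)] lies in [[2 ln 2, 3 ln 2]],
    comparing exponents gives both inequalities once [ln n >= 3]. *)

From Stdlib Require Import Reals Lra Lia.
From Coquelicot Require Import Coquelicot.
Open Scope R_scope.

Lemma exp_le x y : x <= y -> exp x <= exp y.
Proof. intros [H | ->]; [left; now apply exp_increasing | lra]. Qed.

Lemma ln_le_sub_1 x : 0 < x -> ln x <= x - 1.
Proof. intros Hx. pose proof (exp_ineq1_le (ln x)) as H. rewrite exp_ln in H; lra. Qed.

Lemma ln_ge_1_sub_inv x : 0 < x -> 1 - / x <= ln x.
Proof.
  intros Hx. pose proof (ln_le_sub_1 (/ x) (Rinv_0_lt_compat x Hx)) as H.
  rewrite ln_Rinv in H; lra.
Qed.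

Lemma ln_sub_le x y : 0 <= y < x -> ln (x - y) <= ln x - y / x.
Proof.
  intros Hy.
  replace (x - y) with (x * ((x - y) / x)) by (field; lra).
  rewrite ln_mult by (try apply Rdiv_lt_0_compat; lra).
  pose proof (ln_le_sub_1 ((x - y) / x) ltac:(apply Rdiv_lt_0_compat; lra)).
  replace ((x - y) / x - 1) with (- (y / x)) in * by (field; lra). lra.
Qed.

Lemma inv_succ_le_ln_diff x : 0 < x -> / (x + 1) <= ln (x + 1) - ln x.
Proof.
  intros Hx. rewrite <- ln_div by lra.
  pose proof (ln_ge_1_sub_inv ((x + 1) / x) ltac:(apply Rdiv_lt_0_compat; lra)).
  replace (1 - / ((x + 1) / x)) with (/ (x + 1)) in * by (field; lra). lra.
Qed.

Lemma le_of_derive_nonneg (f df : R -> R) a b : a <= b ->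
  (forall c, a <= c <= b -> is_derive f c (df c)) ->
  (forall c, a < c < b -> 0 <= df c) -> f a <= f b.
Proof.
  intros [Hab | ->] Hd Hpos; [| lra].
  destruct (MVT_cor2 f df a b Hab) as [c [Hfab Hc]].
  { intros c Hc. apply is_derive_Reals. now apply Hd. }
  pose proof (Hpos c Hc). nra.
Qed.

Lemma ln_1_plus_ge x : 0 <= x -> 2 * x / (2 + x) <= ln (1 + x).
Proof.
  intros Hx.
  pose proof (le_of_derive_nonneg (fun t => ln (1 + t) - 2 * t / (2 + t))
    (fun t => t * t / ((1 + t) * (2 + t) * (2 + t))) 0 x Hx) as H.
  cbv beta in H. rewrite Rplus_0_r, ln_1 in H.
  enough (0 - 2 * 0 / (2 + 0) <= ln (1 + x) - 2 * x / (2 + x)) by lra.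
  apply H.
  - intros c Hc. auto_derive; [lra | field; lra].
  - intros c Hc. apply Rdiv_le_0_compat; [nra |].
    apply Rmult_lt_0_compat; [apply Rmult_lt_0_compat |]; lra.
Qed.

Lemma ln_1_plus_le x : 0 <= x -> ln (1 + x) <= x - x ^ 2 / 2 + x ^ 3 / 3.
Proof.
  intros Hx.
  pose proof (le_of_derive_nonneg (fun t => t - t ^ 2 / 2 + t ^ 3 / 3 - ln (1 + t))
    (fun t => t ^ 3 / (1 + t)) 0 x Hx) as H.
  cbv beta in H. rewrite Rplus_0_r, ln_1 in H.
  enough (0 - 0 ^ 2 / 2 + 0 ^ 3 / 3 - 0 <= x - x ^ 2 / 2 + x ^ 3 / 3 - ln (1 + x)) by lra.
  apply H.
  - intros c Hc. auto_derive; [lra | field; lra].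
  - intros c Hc. apply Rdiv_le_0_compat; [apply pow_le |]; lra.
Qed.

Lemma ln_2_le : ln 2 <= 71 / 100.
Proof.
  replace 2 with ((1 + 1 / 3) * (1 + 1 / 2)) by field.
  rewrite ln_mult by lra.
  pose proof (ln_1_plus_le (1 / 3) ltac:(lra)).
  pose proof (ln_1_plus_le (1 / 2) ltac:(lra)). lra.
Qed.

Lemma ln_3_ge_1 : 1 <= ln 3.
Proof. rewrite <- (ln_exp 1) at 1. apply ln_le; [apply exp_pos | apply exp_le_3]. Qed.

Lemma ln_2PI_bounds : 2 * ln 2 <= ln (2 * PI) <= 3 * ln 2.
Proof.
  pose proof PI_4. pose proof PI2_1.
  replace (2 * ln 2) with (ln (2 ^ 2)) by (rewrite ln_pow by lra; simpl; ring).
  replace (3 * ln 2) with (ln (2 ^ 3)) by (rewrite ln_pow by lra; simpl; ring).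
  split; apply ln_le; simpl; lra.
Qed.

Lemma stirling_shape_exp x a b : 0 < x ->
  Rpower x a * sqrt x * sqrt (2 * PI) / exp b
  = exp (a * ln x + ln x / 2 + ln (2 * PI) / 2 - b).
Proof.
  intros Hx. pose proof PI_RGT_0.
  rewrite <- !Rpower_sqrt by lra. unfold Rpower, Rdiv.
  rewrite <- exp_Ropp, <- !exp_plus. f_equal. field.
Qed.

Fixpoint ln_fact (n : nat) : R :=
  match n with O => 0 | S m => ln_fact m + ln (INR (S m)) end.

Definition stirling_rem (n : nat) : R :=
  ln_fact n - (INR n * ln (INR n) - INR n + ln (INR n) / 2).

Lemma stirling_rem_1 : stirling_rem 1 = 1.
Proof. unfold stirling_rem. simpl. rewrite ln_1. lra. Qed.

Lemma stirling_rem_S n : (1 <= n)%nat ->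
  stirling_rem (S n) = stirling_rem n + 1 - (INR n + 1 / 2) * ln (1 + / INR n).
Proof.
  intros Hn. assert (1 <= INR n) by (apply (le_INR 1); lia).
  unfold stirling_rem. cbn [ln_fact]. rewrite S_INR.
  replace (ln (INR n + 1)) with (ln (INR n) + ln (1 + / INR n)).
  - field.
  - rewrite <- ln_mult by (try apply Rplus_lt_0_compat; try apply Rinv_0_lt_compat; lra).
    f_equal. field. lra.
Qed.

Lemma stirling_rem_le_1 n : (1 <= n)%nat -> stirling_rem n <= 1.
Proof.
  induction n as [| n IH]; intros Hn; [lia |].
  destruct (Nat.eq_dec n 0) as [-> | Hn0]; [rewrite stirling_rem_1; lra |].
  rewrite stirling_rem_S by lia. specialize (IH ltac:(lia)).
  assert (1 <= INR n) by (apply (le_INR 1); lia).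
  pose proof (ln_1_plus_ge (/ INR n) ltac:(left; apply Rinv_0_lt_compat; lra)).
  assert (1 <= (INR n + 1 / 2) * ln (1 + / INR n)); [| lra].
  replace 1 with ((INR n + 1 / 2) * (2 * / INR n / (2 + / INR n))) at 1 by (field; lra).
  apply Rmult_le_compat_l; lra.
Qed.

Lemma stirling_rem_ge n : (1 <= n)%nat -> 1 / 2 + 1 / (2 * INR n) <= stirling_rem n.
Proof.
  induction n as [| n IH]; intros Hn; [lia |].
  destruct (Nat.eq_dec n 0) as [-> | Hn0]; [rewrite stirling_rem_1; simpl; lra |].
  rewrite stirling_rem_S by lia. specialize (IH ltac:(lia)).
  assert (1 <= INR n) by (apply (le_INR 1); lia).
  set (u := / INR n).
  assert (Hlog : (INR n + 1 / 2) * ln (1 + u)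
                 <= (INR n + 1 / 2) * (u - u ^ 2 / 2 + u ^ 3 / 3)).
  { apply Rmult_le_compat_l; [lra |].
    apply ln_1_plus_le. left; apply Rinv_0_lt_compat; lra. }
  assert (Hgap : 0 <= (5 * INR n ^ 2 - 3 * INR n - 2) / (12 * INR n ^ 3 * (INR n + 1))).
  { apply Rdiv_le_0_compat; [nra |].
    apply Rmult_lt_0_compat; [apply Rmult_lt_0_compat; [lra | apply pow_lt] |]; lra. }
  rewrite S_INR.
  replace ((5 * INR n ^ 2 - 3 * INR n - 2) / (12 * INR n ^ 3 * (INR n + 1)))
    with (1 - (INR n + 1 / 2) * (u - u ^ 2 / 2 + u ^ 3 / 3)
          + 1 / (2 * INR n) - 1 / (2 * (INR n + 1))) in Hgap
    by (unfold u; field; lra).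
  lra.
Qed.

Fixpoint rock_defect (n m : nat) : R :=
  match m with
  | O => 0
  | S k => rock_defect n k + ln (INR (n - S k)) / INR (S k + 1)
  end.

Lemma rock_prod_exp n m : (m < n)%nat ->
  rock_prod n m = exp (ln_fact (n - 1) - ln_fact (n - 1 - m) - rock_defect n m).
Proof.
  induction m as [| m IH]; intros Hm; cbn [rock_prod rock_defect].
  - rewrite Nat.sub_0_r. replace (_ - _ - 0) with 0 by ring. now rewrite exp_0.
  - rewrite IH by lia. unfold Rpower. rewrite <- exp_plus. f_equal.
    replace (n - 1 - m)%nat with (S (n - 1 - S m)) by lia.
    cbn [ln_fact]. replace (S (n - 1 - S m)) with (n - S m)%nat by lia.
    rewrite plus_INR. simpl (INR 1).
    pose proof (pos_INR (S m)). field. lra.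
Qed.

Lemma rockers_exp n : (2 <= n)%nat ->
  rockers n = exp (ln_fact n - rock_defect n (n - 2)).
Proof.
  intros Hn. unfold rockers. rewrite rock_prod_exp by lia.
  replace (n - 1 - (n - 2))%nat with 1%nat by lia.
  assert (Hfact : ln_fact n = ln_fact (n - 1) + ln (INR n)).
  { destruct n as [| k]; [lia |]. cbn [ln_fact]. now rewrite Nat.sub_succ, Nat.sub_0_r. }
  assert (0 < INR n) by (apply (lt_INR 0); lia).
  rewrite Hfact. cbn [ln_fact]. simpl (INR 1). rewrite ln_1.
  rewrite <- (exp_ln (INR n)) at 1 by lra. rewrite <- exp_plus. f_equal. ring.
Qed.

Lemma rock_defect_term_le n k : (1 <= k < n)%nat ->
  ln (INR (n - k)) / INR (k + 1)
  <= ln (INR n) * (ln (INR k + 1) - ln (INR k)) - INR k / (INR k + 1) / INR n.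
Proof.
  intros Hk.
  assert (1 <= INR k) by (apply (le_INR 1); lia).
  assert (INR k < INR n) by (apply lt_INR; lia).
  assert (0 <= ln (INR n)) by (rewrite <- ln_1; apply ln_le; lra).
  rewrite minus_INR, plus_INR by lia. simpl (INR 1).
  pose proof (ln_sub_le (INR n) (INR k) ltac:(lra)).
  pose proof (inv_succ_le_ln_diff (INR k) ltac:(lra)).
  apply Rle_trans with ((ln (INR n) - INR k / INR n) / (INR k + 1)).
  - apply Rmult_le_compat_r; [left; apply Rinv_0_lt_compat |]; lra.
  - replace ((ln (INR n) - INR k / INR n) / (INR k + 1))
      with (ln (INR n) * / (INR k + 1) - INR k / (INR k + 1) / INR n) by (field; lra).
    apply Rplus_le_compat_r, Rmult_le_compat_l; lra.
Qed.

Lemma rock_defect_le n m : (1 <= m < n)%nat ->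
  rock_defect n m <= ln (INR n) * ln (INR m + 1) - (2 * INR m / 3 - 1 / 6) / INR n.
Proof.
  assert (Hk : forall k, (1 <= k)%nat -> 1 <= INR k) by (intros; apply (le_INR 1); lia).
  induction m as [| m IH]; intros Hm; [lia |].
  pose proof (rock_defect_term_le n (S m) ltac:(lia)) as Hterm.
  assert (1 <= INR n) by (apply Hk; lia).
  cbn [rock_defect]. rewrite S_INR in *.
  destruct (Nat.eq_dec m 0) as [-> | Hm0].
  - cbn [rock_defect]. simpl (INR 0) in *. rewrite Rplus_0_l, ln_1 in *.
    replace (0 + 1 + 1) with (1 + 1) by ring.
    replace ((2 * (0 + 1) / 3 - 1 / 6) / INR n) with (1 / (1 + 1) / INR n) by (field; lra).
    lra.
  - specialize (IH ltac:(lia)). specialize (Hk m ltac:(lia)).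
    assert (2 / 3 / INR n <= (INR m + 1) / (INR m + 1 + 1) / INR n).
    { apply Rmult_le_compat_r; [left; apply Rinv_0_lt_compat; lra |].
      apply Rmult_le_reg_r with (INR m + 1 + 1); [lra |]. field_simplify; lra. }
    replace ((2 * (INR m + 1) / 3 - 1 / 6) / INR n)
      with ((2 * INR m / 3 - 1 / 6) / INR n + 2 / 3 / INR n) by (field; lra).
    lra.
Qed.

Lemma rock_defect_mono n p m : (p <= m < n)%nat -> rock_defect n p <= rock_defect n m.
Proof.
  induction m as [| m IH]; intros Hpm.
  - replace p with 0%nat by lia. lra.
  - destruct (Nat.eq_dec p (S m)) as [-> | Hp]; [lra |].
    cbn [rock_defect]. specialize (IH ltac:(lia)).
    assert (0 <= ln (INR (n - S m)) / INR (S m + 1)); [| lra].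
    apply Rdiv_le_0_compat.
    + rewrite <- ln_1. apply ln_le; [lra | apply (le_INR 1); lia].
    + apply (lt_INR 0); lia.
Qed.

Lemma rock_defect_ge n : (6 <= n)%nat ->
  13 / 12 * (ln (INR n) - ln 2) <= rock_defect n (n - 2).
Proof.
  intros Hn. assert (6 <= INR n) by (replace 6 with (INR 6) by (simpl; lra); now apply le_INR).
  apply Rle_trans with (rock_defect n 3); [| apply rock_defect_mono; lia].
  cbn [rock_defect]. rewrite !minus_INR by lia. simpl (INR _).
  rewrite <- ln_div by lra.
  assert (ln (INR n / 2) <= ln (INR n - (1 + 1 + 1))) by (apply ln_le; lra).
  assert (ln (INR n - (1 + 1 + 1)) <= ln (INR n - (1 + 1))) by (apply ln_le; lra).
  assert (ln (INR n - (1 + 1 + 1)) <= ln (INR n - 1)) by (apply ln_le; lra).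
  lra.
Qed.

Lemma rock_defect_le_sq n : (23 <= n)%nat ->
  rock_defect n (n - 2) <= ln (INR n) ^ 2 - 3 / 5.
Proof.
  intros Hn. assert (23 <= INR n) by (replace 23 with (INR 23) by (simpl; lra); now apply le_INR).
  pose proof (rock_defect_le n (n - 2) ltac:(lia)) as Hle.
  rewrite minus_INR in Hle by lia. simpl (INR 2) in Hle.
  assert (0 <= ln (INR n)) by (rewrite <- ln_1; apply ln_le; lra).
  assert (ln (INR n) * ln (INR n - (1 + 1) + 1) <= ln (INR n) ^ 2).
  { replace (ln (INR n) ^ 2) with (ln (INR n) * ln (INR n)) by ring.
    apply Rmult_le_compat_l; [lra | apply ln_le; lra]. }
  assert (3 / 5 <= (2 * (INR n - (1 + 1)) / 3 - 1 / 6) / INR n).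
  { apply Rmult_le_reg_r with (INR n); [lra |]. field_simplify; lra. }
  lra.
Qed.

Theorem mainTheorem4 : exists N : nat, forall n : nat, (N <= n)%nat ->
  Rpower (INR n) (INR n - ln (INR n)) * sqrt (INR n) * sqrt (2 * PI) / exp (INR n)
    <= rockers n /\
  rockers n <=
  Rpower (INR n) (INR n) * sqrt (INR n) * sqrt (2 * PI)
    / (Rpower 2 (ln (INR n)) * exp (INR n)).
Proof.
  exists 27%nat. intros n Hn.
  assert (Hx : 27 <= INR n) by (replace 27 with (INR 27) by (simpl; lra); now apply le_INR).
  assert (HL : 3 <= ln (INR n)).
  { apply Rle_trans with (ln (3 ^ 3)); [rewrite ln_pow by lra; simpl; pose proof ln_3_ge_1; lra |].
    apply ln_le; simpl; lra. }
  replace (Rpower 2 (ln (INR n)) * exp (INR n)) with (exp (ln (INR n) * ln 2 + INR n))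
    by (unfold Rpower; now rewrite exp_plus).
  rewrite rockers_exp by lia. rewrite !stirling_shape_exp by lra.
  pose proof (stirling_rem_ge n ltac:(lia)). pose proof (stirling_rem_le_1 n ltac:(lia)).
  pose proof (rock_defect_le_sq n ltac:(lia)). pose proof (rock_defect_ge n ltac:(lia)).
  pose proof ln_2_le. pose proof ln_2PI_bounds.
  assert (0 <= 1 / (2 * INR n)) by (apply Rdiv_le_0_compat; lra).
  assert (ln (INR n) * ln 2 <= ln (INR n) * (71 / 100)) by (apply Rmult_le_compat_l; lra).
  unfold stirling_rem in *. split; apply exp_le; nra.
Qed.
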